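(* Let $V$ be a finite-dimensional vector space over an algebraically closed field of characteristic zero and $d\ge 2$. Suppose $[F] \in \mathbb{P}(S^d V)$ is a form of maximal Waring rank (among all forms of degree $d$ on $V$). Then $F$ is concise. In particular, a general point in each irreducible component of $W_m$ is a concise form.
   Context: The Waring rank of $F\in S^dV$ is the least $r$ such that $F$ is a sum of $r$ $d$-th powers of linear forms; $m$ denotes the maximal Waring rank for forms of degree $d$ on $V$, and $W_m$ is the Zariski closure of the set of classes of forms of rank exactly $m$. $F$ is concise if there is no proper subspace $V'\subsetneq V$ with $F\in S^dV'$. *)

From HB Require Import structures.
From mathcomp Require Import all_boot all_order all_algebra.
From mathcomp Require Import multinomials.mpoly.
Set Implicit Arguments. Unset Strict Implicit. Unset Printing Implicit Defensive.
Import GRing.Theory.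
Local Open Scope ring_scope.

(* V = k^n, with the variables 'X_0, ..., 'X_(n-1) a basis of V, so that
   S^d V is the space of homogeneous polynomials of degree d in
   {mpoly k[n]}. *)
Definition linform (k : fieldType) (n : nat) (v : 'rV[k]_n) : {mpoly k[n]} :=
  \sum_(i < n) v 0 i *: 'X_i.

Definition waring_decomp (k : fieldType) (n d : nat) (F : {mpoly k[n]}) (r : nat) : Prop :=
  exists L : 'M[k]_(r, n), F = \sum_(j < r) (linform (row j L)) ^+ d.

Definition is_waring_rank (k : fieldType) (n d : nat) (F : {mpoly k[n]}) (r : nat) : Prop :=
  waring_decomp d F r /\ forall r', waring_decomp d F r' -> (r <= r')%N.

(* F (of degree d) lies in S^d V' where V' is the row space of A,
   i.e. F is a homogeneous degree-d polynomial in the linear forms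
   spanning V'. *)
Definition in_Sd_sub (k : fieldType) (n d r : nat) (F : {mpoly k[n]}) (A : 'M[k]_(r, n)) : Prop :=
  exists P : {mpoly k[r]}, P \is d.-homog /\
    F = P \mPo [tuple linform (row j A) | j < r].

Definition concise (k : fieldType) (n d : nat) (F : {mpoly k[n]}) : Prop :=
  forall (r : nat) (A : 'M[k]_(r, n)), (\rank A < n)%N -> ~ in_Sd_sub d F A.

From HB Require Import structures.
From mathcomp Require Import all_boot all_order all_algebra.
From mathcomp Require Import multinomials.mpoly.
From Stdlib Require Import Classical.
Set Implicit Arguments. Unset Strict Implicit. Unset Printing Implicit Defensive.
Import GRing.Theory.
Local Open Scope ring_scope.

(* Suppose F lies in S^d V' for a proper subspace V', and pick u <> 0 vanishing
   on V' and e with e.u = 1.  Every linear map fixing u^perp pointwise fixes F,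
   and those sending e to w carry F + e^d to F + w^d.  By maximality of m,
   F + e^d is a sum of s <= m powers l_1^d + ... + l_s^d.  Choosing w so that
   l_1 is sent to a d-th root of unity times w (possible since d >= 2 and the
   characteristic is 0), the image of l_1^d cancels w^d, so F is a sum of
   s - 1 < m powers, a contradiction (s = 0 would force F = 0). *)

Lemma comp_mpolyA (R : comRingType) (r s n : nat) (P : {mpoly R[r]})
    (t : r.-tuple {mpoly R[s]}) (t' : s.-tuple {mpoly R[n]}) :
  (P \mPo t) \mPo t' = P \mPo [tuple tnth t i \mPo t' | i < r].
Proof.
rewrite (comp_mpolyE P t) (comp_mpolyE P) raddf_sum /=; apply: eq_bigr => m _.
rewrite linearZ /= rmorph_prod /=; congr (_ *: _); apply: eq_bigr => i _.
by rewrite rmorphXn tnth_mktuple.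
Qed.

Section LinearForms.
Variables (k : fieldType) (n : nat).

Lemma linform_is_linear : linear (@linform k n).
Proof.
move=> c v w; rewrite /linform scaler_sumr -big_split /=.
by apply: eq_bigr => i _; rewrite !mxE scalerDl scalerA.
Qed.

HB.instance Definition _ :=
  GRing.isLinear.Build k 'rV[k]_n {mpoly k[n]} _ (@linform k n) linform_is_linear.

Lemma linform_homog (v : 'rV[k]_n) : linform v \is 1.-homog.
Proof.
apply: rpred_sum => i _; apply: rpredZ.
by rewrite dhomogX; apply/eqP; apply: mdeg1.
Qed.

Lemma linform_exp_homog (v : 'rV[k]_n) d : linform v ^+ d \is d.-homog.
Proof. by have := dhomogMn d (linform_homog v); rewrite mul1n. Qed.

Definition linsubst (M : 'M[k]_n) : n.-tuple {mpoly k[n]} :=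
  [tuple linform (row i M) | i < n].

Lemma comp_linform_linsubst (v : 'rV[k]_n) M :
  linform v \mPo linsubst M = linform (v *m M).
Proof.
rewrite [in RHS](mulmx_sum_row v M) !linear_sum /=; apply: eq_bigr => i _.
by rewrite !linearZ /= comp_mpolyXU -tnth_nth tnth_mktuple.
Qed.

Lemma comp_linsubst r (P : {mpoly k[r]}) (A : 'M[k]_(r, n)) M :
  (P \mPo [tuple linform (row j A) | j < r]) \mPo linsubst M =
  P \mPo [tuple linform (row j (A *m M)) | j < r].
Proof.
rewrite comp_mpolyA; congr (P \mPo _); apply: eq_from_tnth => j.
by rewrite !tnth_mktuple comp_linform_linsubst row_mul.
Qed.

Lemma waring_decomp_add_power d F r (v : 'rV[k]_n) :
  waring_decomp d F r -> waring_decomp d (F + linform v ^+ d) r.+1.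
Proof.
move=> [L ->]; exists (col_mx v L).
rewrite (@big_split_ord _ _ _ 1 r) big_ord1 addrC.
congr (_ + _); first by rewrite (rowKu ord0 v L) row_id.
by apply: eq_bigr => j _; rewrite (rowKd j v L).
Qed.

End LinearForms.

Section PerpFixingMaps.
Variables (k : fieldType) (n : nat) (u e : 'rV[k]_n).

(* Acting on row vectors, [perpfix w] fixes [u^perp] pointwise and, when
   [e *m u^T = 1], sends [e] to [w]. *)
Definition perpfix (w : 'rV[k]_n) : 'M[k]_n := 1%:M + u^T *m (w - e).

Lemma mulmx_perpfix v w : v *m perpfix w = v + (v *m u^T) 0 0 *: (w - e).
Proof.
rewrite mulmxDr mulmx1 mulmxA.
by rewrite {1}[v *m u^T]mx11_scalar mul_scalar_mx.
Qed.

Lemma mulmx_perpfix_ker r (A : 'M[k]_(r, n)) w : A *m u^T = 0 -> A *m perpfix w = A.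
Proof. by move=> Au0; rewrite mulmxDr mulmx1 mulmxA Au0 mul0mx addr0. Qed.

Hypothesis eu1 : (e *m u^T) 0 0 = 1.

Lemma mulmx_perpfix_e w : e *m perpfix w = w.
Proof. by rewrite mulmx_perpfix eu1 scale1r addrC subrK. Qed.

Variables (d : nat) (F : {mpoly k[n]}).
Hypothesis F_perpfix : forall w, F \mPo linsubst (perpfix w) = F.

Lemma comp_add_power_perpfix w :
  (F + linform e ^+ d) \mPo linsubst (perpfix w) = F + linform w ^+ d.
Proof.
by rewrite comp_mpolyD rmorphXn /= F_perpfix comp_linform_linsubst mulmx_perpfix_e.
Qed.

Lemma waring_decomp_add_power_nil :
  (0 < d)%N -> waring_decomp d (F + linform e ^+ d) 0 -> F = 0.
Proof.
move=> d_gt0 [L defG]; have := comp_add_power_perpfix 0.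
by rewrite defG big_ord0 comp_mpoly0 linear0 expr0n gtn_eqF // addr0.
Qed.

Hypothesis root_of_unity_neq : forall c : k, exists2 om : k, om ^+ d = 1 & om != c.

Lemma waring_decomp_add_power_cons s :
  waring_decomp d (F + linform e ^+ d) s.+1 -> waring_decomp d F s.
Proof.
move=> [L defG]; set c := (row 0 L *m u^T) 0 0.
have [om om_root om_neq_c] := root_of_unity_neq c.
(* [w] solves [row 0 L + c *: (w - e) = om *: w]. *)
have [w defw] : exists w, (om - c) *: w = row 0 L - c *: e.
  by exists ((om - c)^-1 *: (row 0 L - c *: e)); rewrite scalerA mulfV ?scale1r ?subr_eq0.
have L0_w : row 0 L *m perpfix w = om *: w.
  have -> : om *: w = (om - c) *: w + c *: w by rewrite -scalerDl subrK.
  by rewrite defw mulmx_perpfix -/c scalerBr addrCA addrC.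
have := comp_add_power_perpfix w; rewrite defG linear_sum big_ord_recl /=.
rewrite rmorphXn /= comp_linform_linsubst L0_w linearZ exprZn om_root scale1r.
rewrite [F + _]addrC => /addrI <-.
exists (rowsub (lift ord0) L *m perpfix w); apply: eq_bigr => j _.
by rewrite rmorphXn /= comp_linform_linsubst row_mul row_rowsub.
Qed.

End PerpFixingMaps.

Lemma classical_ex_minn (P : nat -> Prop) N :
  P N -> exists2 r, P r & forall r', P r' -> (r <= r')%N.
Proof.
elim/ltn_ind: N => N IH PN.
have [[r' Pr' lt_r'N] | no_smaller] := classic (exists2 r', P r' & (r' < N)%N).
  exact: IH Pr'.
exists N => // r' Pr'; rewrite leqNgt; apply/negP => lt_r'N.
by apply: no_smaller; exists r'.
Qed.

Lemma exists_kernel_vector (k : fieldType) r n (A : 'M[k]_(r, n)) :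
  (\rank A < n)%N -> exists2 u : 'rV[k]_n, u != 0 & A *m u^T = 0.
Proof.
move=> rkA; have : kermx A^T != 0.
  by rewrite -mxrank_eq0 mxrank_ker mxrank_tr subn_eq0 -ltnNge.
case/rowV0Pn => u /sub_kermxP uA0 u_neq0; exists u => //.
by rewrite -[A]trmxK -trmx_mul uA0 trmx0.
Qed.

Lemma exists_dual_unit (k : fieldType) n (u : 'rV[k]_n) :
  u != 0 -> exists e : 'rV[k]_n, (e *m u^T) 0 0 = 1.
Proof.
move=> u_neq0; have [i ui_neq0] : exists i, u 0 i != 0.
  apply/existsP; apply: contraR u_neq0 => /existsPn u0.
  by apply/eqP/rowP => i; rewrite mxE; apply/eqP/negbNE.
exists ((u 0 i)^-1 *: delta_mx 0 i).
by rewrite -scalemxAl mxE -(rowE i u^T) !mxE mulVf.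
Qed.

(* For [c = 1] take a root of [1 + X + ... + X^(d-1)], which is not [1]
   because [d != 0] in [k]. *)
Lemma exists_root_of_unity_neq (k : closedFieldType) d :
  (1 < d)%N -> d%:R != 0 :> k -> forall c : k, exists2 om : k, om ^+ d = 1 & om != c.
Proof.
move=> d_gt1 d_neq0 c; have [->|c_neq1] := eqVneq c 1; last first.
  by exists 1; rewrite ?expr1n // eq_sym.
case: d d_gt1 d_neq0 => [|[|d]] // _ d_neq0.
have [x xd] := @solve_monicpoly k d.+1 (fun _ => -1) isT.
have sum_x : \sum_(i < d.+2) x ^+ i = 0.
  rewrite big_ord_recr /= xd -big_split /= big1 // => i _.
  by rewrite mulN1r subrr.
exists x; first by apply/eqP; rewrite -subr_eq0 subrX1 sum_x mulr0.
apply: contra_neq d_neq0 => x1; rewrite -sum_x x1.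
by rewrite (eq_bigr (fun _ => 1)) ?sumr_const ?card_ord // => i _; rewrite expr1n.
Qed.

Theorem lemma4p8 (k : closedFieldType) (hchar : [pchar k] =i pred0)
  (n d : nat) (hd : (2 <= d)%N) (F : {mpoly k[n]})
  (hF : F \is d.-homog) (hF0 : F != 0)
  (m : nat) (hrk : is_waring_rank d F m)
  (hmax : forall (G : {mpoly k[n]}) (r : nat),
      G \is d.-homog -> is_waring_rank d G r -> (r <= m)%N) :
  concise d F.
Proof.
move=> r A rkA [P [_ defF]].
have [u u_neq0 Au0] := exists_kernel_vector rkA.
have [e eu1] := exists_dual_unit u_neq0.
have F_perpfix w : F \mPo linsubst (perpfix u e w) = F.
  by rewrite defF comp_linsubst mulmx_perpfix_ker.
set G := F + linform e ^+ d.
have G_homog : G \is d.-homog by rewrite rpredD ?linform_exp_homog.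
have [s Gs Gmin] := classical_ex_minn (waring_decomp_add_power e (proj1 hrk)).
have := hmax G s G_homog (conj Gs Gmin).
case: s {Gmin} Gs => [|s] Gs rank_le_m.
  by move: hF0; rewrite (waring_decomp_add_power_nil eu1 F_perpfix _ Gs) ?eqxx ?(ltnW hd).
have d_neq0 : d%:R != 0 :> k by rewrite (pcharf0P k).1 // -lt0n ltnW.
have roots := exists_root_of_unity_neq hd d_neq0.
have := proj2 hrk s (waring_decomp_add_power_cons eu1 F_perpfix roots Gs).
by rewrite leqNgt rank_le_m.
Qed.
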